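(* Let $M$ be a unit speed curve $\gamma: I\to\mathbb{R}^3$ with arc-length parameter $s$, curvature $\kappa(s)\neq 0$ and torsion $\tau(s)$, and put $\varphi(s) = \int_0^s \tau(t)\,dt + \varphi_0$ for a constant $\varphi_0$. Let $K$ be a curve $\beta$, parametrized by the same arc-length parameter $s$, with $\beta''(s) = \overline{\kappa}(s)\gamma'(s)$, whose curvature and torsion are $\overline{\kappa}(s) = \kappa(s)\cos\varphi(s)$ and $\overline{\tau}(s) = \kappa(s)\sin\varphi(s)$. Then: (i) $K$ is a Mannheim curve if and only if $\kappa(s) = R\cos\left(\int_0^s\tau(t)\,dt+\varphi_0\right)$ for some constant $R$; (ii) $K$ is a $B$-Mannheim curve if and only if $\kappa(s) = R\sin\left(\int_0^s\tau(t)\,dt+\varphi_0\right)$ for some constant $R$.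
   Context: A curve with curvature $\overline{\kappa}$ and torsion $\overline{\tau}$ is a Mannheim curve if $\overline{\kappa}^2+\overline{\tau}^2 = c\,\overline{\kappa}$ for some nonzero real constant $c$ (equivalently $\overline{\kappa} = \lambda(\overline{\kappa}^2+\overline{\tau}^2)$ with $\lambda = 1/c$ constant), and a $B$-Mannheim curve if $\overline{\kappa}^2+\overline{\tau}^2 = c\,\overline{\tau}$ for some nonzero real constant $c$. *)

From Stdlib Require Import Reals.
From Coquelicot Require Import Coquelicot.
Open Scope R_scope.

Definition vec3 : Type := (R * R * R)%type.
Definition vx (v : vec3) : R := fst (fst v).
Definition vy (v : vec3) : R := snd (fst v).
Definition vz (v : vec3) : R := snd v.

Definition vscale (a : R) (v : vec3) : vec3 := (a * vx v, a * vy v, a * vz v).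
Definition dot (u v : vec3) : R := vx u * vx v + vy u * vy v + vz u * vz v.
Definition cross (u v : vec3) : vec3 :=
  (vy u * vz v - vz u * vy v, vz u * vx v - vx u * vz v, vx u * vy v - vy u * vx v).
Definition vnorm (v : vec3) : R := sqrt (dot v v).

Definition dcurve (g : R -> vec3) : R -> vec3 :=
  fun t => (Derive (fun s => vx (g s)) t, Derive (fun s => vy (g s)) t,
            Derive (fun s => vz (g s)) t).

Definition ex_dcurve (g : R -> vec3) (t : R) : Prop :=
  ex_derive (fun s => vx (g s)) t /\ ex_derive (fun s => vy (g s)) t /\
  ex_derive (fun s => vz (g s)) t.

Definition inI (a b s : R) : Prop := a < s < b.

Definition C3_on (a b : R) (g : R -> vec3) : Prop :=
  forall s, inI a b s ->
    ex_dcurve g s /\ ex_dcurve (dcurve g) s /\ ex_dcurve (dcurve (dcurve g)) s.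

Definition unit_speed (a b : R) (g : R -> vec3) : Prop :=
  forall s, inI a b s -> vnorm (dcurve g s) = 1.

(* curvature and torsion of a unit speed curve (standard formulas) *)
Definition curvature (g : R -> vec3) (t : R) : R := vnorm (dcurve (dcurve g) t).
Definition torsion (g : R -> vec3) (t : R) : R :=
  dot (cross (dcurve g t) (dcurve (dcurve g) t)) (dcurve (dcurve (dcurve g)) t)
  / (curvature g t) ^ 2.

(* Frenet data of a unit speed curve beta w.r.t. a prescribed unit principal
   normal field N:  beta'' = kb N  (kb = signed curvature), binormal
   B = beta' x N, and torsion tb = - <B', N>. *)
Definition frenet_curv_tors (a b : R) (beta N : R -> vec3) (kb tb : R -> R) : Prop :=
  forall s, inI a b s ->
    ex_dcurve (fun t => cross (dcurve beta t) (N t)) s /\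
    vnorm (N s) = 1 /\
    dcurve (dcurve beta) s = vscale (kb s) (N s) /\
    tb s = - dot (dcurve (fun t => cross (dcurve beta t) (N t)) s) (N s).

Definition Mannheim (a b : R) (kb tb : R -> R) : Prop :=
  exists c : R, c <> 0 /\ forall s, inI a b s -> kb s ^ 2 + tb s ^ 2 = c * kb s.
Definition B_Mannheim (a b : R) (kb tb : R -> R) : Prop :=
  exists c : R, c <> 0 /\ forall s, inI a b s -> kb s ^ 2 + tb s ^ 2 = c * tb s.

From Stdlib Require Import Reals Psatz.
From Coquelicot Require Import Coquelicot.
Open Scope R_scope.

(* The pair (kbar, tbar) is (kappa, phi) in polar coordinates, so
   kbar^2 + tbar^2 = kappa^2.  The Mannheim condition kappa^2 = c kappa cos phi
   therefore becomes kappa = c cos phi after cancelling kappa <> 0, and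
   conversely kappa = R cos phi forces R <> 0 because kappa does not vanish.
   The B-Mannheim case is the same with sin in place of cos. *)

Lemma polar_sq_norm (k t : R) : (k * cos t) ^ 2 + (k * sin t) ^ 2 = k ^ 2.
Proof.
  pose proof (sin2_cos2 t) as Hpyth. unfold Rsqr in Hpyth. nra.
Qed.

Section NonvanishingProportional.

Variables (P : R -> Prop) (k u : R -> R).
Hypothesis P_inhabited : exists s0, P s0.
Hypothesis k_neq0 : forall s, P s -> k s <> 0.

Lemma sq_eq_const_mul_iff :
  (exists c, c <> 0 /\ forall s, P s -> k s ^ 2 = c * (k s * u s)) <->
  (exists R0, forall s, P s -> k s = R0 * u s).
Proof.
  split.
  - intros [c [_ Hc]]. exists c. intros s Hs.
    apply (Rmult_eq_reg_l (k s)); [| exact (k_neq0 s Hs)].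
    specialize (Hc s Hs). nra.
  - intros [R0 HR0]. exists R0. split.
    + intros ->. destruct P_inhabited as [s0 Hs0].
      apply (k_neq0 s0 Hs0). rewrite (HR0 s0 Hs0). ring.
    + intros s Hs. rewrite (HR0 s Hs). ring.
Qed.

End NonvanishingProportional.

Section PolarCurvatureTorsion.

Variables (a b : R) (k t : R -> R).
Hypothesis I_inhabited : exists s0, inI a b s0.
Hypothesis k_neq0 : forall s, inI a b s -> k s <> 0.

Lemma Mannheim_polar_iff :
  Mannheim a b (fun s => k s * cos (t s)) (fun s => k s * sin (t s)) <->
  (exists R0, forall s, inI a b s -> k s = R0 * cos (t s)).
Proof.
  rewrite <- (sq_eq_const_mul_iff _ k (fun s => cos (t s)) I_inhabited k_neq0).
  unfold Mannheim. setoid_rewrite polar_sq_norm. reflexivity.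
Qed.

Lemma B_Mannheim_polar_iff :
  B_Mannheim a b (fun s => k s * cos (t s)) (fun s => k s * sin (t s)) <->
  (exists R0, forall s, inI a b s -> k s = R0 * sin (t s)).
Proof.
  rewrite <- (sq_eq_const_mul_iff _ k (fun s => sin (t s)) I_inhabited k_neq0).
  unfold B_Mannheim. setoid_rewrite polar_sq_norm. reflexivity.
Qed.

End PolarCurvatureTorsion.

Theorem mainTheorem5 (a b : R) (gamma beta : R -> vec3) (phi0 : R) :
  a < 0 < b ->
  C3_on a b gamma -> unit_speed a b gamma ->
  (forall s, inI a b s -> curvature gamma s <> 0) ->
  C3_on a b beta -> unit_speed a b beta ->
  let kappa := curvature gamma in
  let tau := torsion gamma in
  let phi := fun s => RInt tau 0 s + phi0 in
  let kbar := fun s => kappa s * cos (phi s) in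
  let tbar := fun s => kappa s * sin (phi s) in
  frenet_curv_tors a b beta (dcurve gamma) kbar tbar ->
  (Mannheim a b kbar tbar <->
     exists R0 : R, forall s, inI a b s -> kappa s = R0 * cos (RInt tau 0 s + phi0)) /\
  (B_Mannheim a b kbar tbar <->
     exists R0 : R, forall s, inI a b s -> kappa s = R0 * sin (RInt tau 0 s + phi0)).
Proof.
  intros H0ab _ _ Hkappa _ _ kappa tau phi kbar tbar _.
  assert (HI : exists s0, inI a b s0) by (exists 0; exact H0ab).
  split.
  - exact (Mannheim_polar_iff a b kappa phi HI Hkappa).
  - exact (B_Mannheim_polar_iff a b kappa phi HI Hkappa).
Qed.
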